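(* Let $G$ be a connected graph on $n$ vertices that is not a tree. Let $Z_{\mathrm{sink},0}$ be the number of sink-free orientations of $G$ and $Z_{\mathrm{sink},1}$ the number of orientations of $G$ with exactly one sink. Then $\frac{Z_{\mathrm{sink},1}}{Z_{\mathrm{sink},0}}\le n(n-1)$.
   Context: An orientation assigns each edge $\{u,v\}$ a direction $(u,v)$ or $(v,u)$; a sink is a vertex all of whose incident edges are directed towards it; a sink-free orientation has no sink. *)

From mathcomp Require Import all_boot all_order all_algebra.
Set Implicit Arguments. Unset Strict Implicit. Unset Printing Implicit Defensive.

Definition simple_graph (T : finType) (e : rel T) : Prop :=
  symmetric e /\ irreflexive e.

Definition connected_graph (T : finType) (e : rel T) : Prop :=
  forall u v : T, connect e u v.

Definition has_cycle (T : finType) (e : rel T) : Prop :=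
  exists (x : T) (p : seq T),
    [/\ 2 <= size p, uniq (x :: p), path e x p & e (last x p) x].

Definition is_tree (T : finType) (e : rel T) : Prop :=
  connected_graph e /\ ~ has_cycle e.

(* An orientation is encoded as o : {ffun T * T -> bool}, o (u,v) meaning the
   edge {u,v} is directed (u,v).  It is only true on edges, and each edge
   receives exactly one of its two directions. *)
Definition is_orientation (T : finType) (e : rel T) (o : {ffun T * T -> bool}) : bool :=
  [forall u, forall v, (o (u, v) ==> e u v) && (e u v ==> (o (u, v) != o (v, u)))].

Definition is_sink (T : finType) (e : rel T) (o : {ffun T * T -> bool}) (v : T) : bool :=
  [forall u, e u v ==> o (u, v)].

Definition num_sinks (T : finType) (e : rel T) (o : {ffun T * T -> bool}) : nat :=
  #|[set v | is_sink e o v]|.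

Definition Z_sink (T : finType) (e : rel T) (k : nat) : nat :=
  #|[set o : {ffun T * T -> bool} | is_orientation e o && (num_sinks e o == k)]|.

From mathcomp Require Import all_boot all_order all_algebra.
Import Order.TTheory GRing.Theory Num.Theory.
Set Implicit Arguments. Unset Strict Implicit. Unset Printing Implicit Defensive.

(* Every orientation s with exactly one sink v is of the form decode t v w with
   t sink-free and w <> v, whence Z_1 <= n (n - 1) Z_0.
   Call b -> b' an r-step when b' is the only out-neighbour of b. If every vertex
   reached v by r-steps, the vertex of a cycle with the largest set of r-successors
   would have two out-edges on the cycle; so, as G is connected and not a tree,
   some edge (w, b) of s leaves a vertex w that does not reach v by r-steps and
   enters one, b, that does. Reversing (w, b) together with the r-chain from b to
   v yields a sink-free orientation t, in which the reversed chain is exactly the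
   set of vertices reachable from v without leaving w; reversing the edges out of
   that set (decode t v w) gives back s. *)

Section ConnectIn.
Variables (T : finType) (r : rel T) (S : pred T).
Hypothesis r_closed : forall a b, S a -> r a b -> S b.

Lemma connect_closed_in x y : S x -> connect r x y -> S y.
Proof.
move=> Sx /connectP[p r_p ->]; elim: p x Sx r_p => //= z p IHp x Sx /andP[rxz].
exact: IHp (r_closed Sx rxz).
Qed.

Lemma connect_sub_in (r' : rel T) x y :
  (forall a b, S a -> r a b -> r' a b) -> S x -> connect r x y -> connect r' x y.
Proof.
move=> rr' Sx /connectP[p r_p ->]; elim: p x Sx r_p => //= z p IHp x Sx /andP[rxz].
by move/(IHp z (r_closed Sx rxz)); apply: connect_trans; rewrite connect1 ?rr'.
Qed.

End ConnectIn.

Lemma connect_last_step (T : finType) (r : rel T) x y :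
  connect r x y -> x != y -> exists2 a, connect r x a & r a y.
Proof.
move=> /connectP[p]; elim/last_ind: p => [_ -> /eqP//|p z _].
rewrite rcons_path last_rcons => /andP[r_p rz] -> _.
by exists (last x p); [apply/connectP; exists p | ].
Qed.

Lemma cycle_two_neighbours (T : eqType) (e : rel T) (c : seq T) x :
  symmetric e -> uniq c -> 2 < size c -> cycle e c -> x \in c ->
  exists a b, [/\ a \in c, b \in c, a != b, e x a & e x b].
Proof.
move=> sym_e uc szc cc /rot_to[i q rot_c].
have memq y : y \in x :: q -> y \in c by rewrite -rot_c mem_rot.
have [ux cx] : uniq (x :: q) /\ cycle e (x :: q) by rewrite -rot_c rot_uniq rot_cycle.
have szq : 1 < size q by move: szc; rewrite -(size_rot i) rot_c.
case: q {rot_c} memq ux cx szq => [|a [|z q]] //= memq /and4P[_ aq _ _].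
rewrite rcons_path => /and3P[xa _ /andP[_ bx]] _.
have bq : last z q \in z :: q := mem_last z q.
exists a, (last z q); split; rewrite // 1?sym_e //.
- by rewrite memq // !inE eqxx orbT.
- by rewrite memq // inE (in_cons a) bq !orbT.
- by apply: contraNneq aq => ->.
Qed.

Section Orientations.
Variables (T : finType) (e : rel T).
Hypothesis sym_e : symmetric e.
Implicit Types (o s t : {ffun T * T -> bool}) (P : T -> T -> bool).

Lemma orientation_edge o a b : is_orientation e o -> o (a, b) -> e a b.
Proof. by move=> /forallP/(_ a)/forallP/(_ b)/andP[/implyP]. Qed.

Lemma orientation_flip o a b : is_orientation e o -> e a b -> o (a, b) = ~~ o (b, a).
Proof.
move=> /forallP/(_ a)/forallP/(_ b)/andP[_ /implyP o_ab] /o_ab.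
by case: (o (a, b)); case: (o (b, a)).
Qed.

Lemma orientation_asym o a b : is_orientation e o -> ~~ (o (a, b) && o (b, a)).
Proof.
move=> o_or; apply/andP=> [[o_ab o_ba]].
by move: (orientation_flip o_or (orientation_edge o_or o_ab)); rewrite o_ab o_ba.
Qed.

Lemma not_sinkP o u :
  is_orientation e o -> reflect (exists y, o (u, y)) (~~ is_sink e o u).
Proof.
move=> o_or; apply: (iffP forallPn) => [[y]|[y o_uy]].
  rewrite negb_imply => /andP[e_yu o_yu]; exists y.
  by rewrite (orientation_flip o_or (_ : e u y)) // sym_e.
exists y; have e_uy := orientation_edge o_or o_uy.
by rewrite sym_e e_uy (orientation_flip o_or (_ : e y u)) ?negbK // sym_e.
Qed.

Definition reverse_edges o P : {ffun T * T -> bool} :=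
  [ffun q => (o q && ~~ P q.1 q.2) || (o (q.2, q.1) && P q.2 q.1)].

Lemma reverse_edgesE o P a b :
  reverse_edges o P (a, b) = (o (a, b) && ~~ P a b) || (o (b, a) && P b a).
Proof. by rewrite ffunE. Qed.

Lemma reverse_edges_orientation o P :
  is_orientation e o -> is_orientation e (reverse_edges o P).
Proof.
move=> o_or; apply/forallP=> a; apply/forallP=> b; rewrite !reverse_edgesE.
apply/andP; split; apply/implyP.
  by case/orP=> /andP[/(orientation_edge o_or)] // e_ba _; rewrite sym_e.
move=> e_ab; rewrite (orientation_flip o_or e_ab).
by case: (o (b, a)); case: (P a b); case: (P b a).
Qed.

Lemma reverse_edgesK o P Q :
  is_orientation e o ->
  (forall a b, reverse_edges o P (a, b) -> Q a b = o (b, a) && P b a) ->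
  reverse_edges (reverse_edges o P) Q = o.
Proof.
move=> o_or QP; apply/ffunP=> [[a b]].
move: (QP a b) (QP b a) (orientation_asym a b o_or); rewrite !reverse_edgesE.
by case: (o (a, b)); case: (o (b, a)); case: (P a b); case: (P b a) => //= -> // ->.
Qed.

Definition unique_out o : rel T :=
  [rel a b | o (a, b) && [forall y, o (a, y) ==> (y == b)]].

Lemma unique_out_fun o a b c : unique_out o a b -> unique_out o a c -> b = c.
Proof.
by move=> /andP[_ /forallP b_uniq] /andP[o_ac _]; apply/esym/eqP/(implyP (b_uniq c)).
Qed.

Section UniqueOutChains.
Variables (o : {ffun T * T -> bool}) (v : T).
Hypothesis v_no_out : forall y, ~~ o (v, y).
Local Notation r := (unique_out o).

Lemma unique_out_step x y : connect r x v -> o (x, y) -> r x y && connect r y v.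
Proof.
move=> /connectP[[|d p] /= r_p v_eq]; first by rewrite -v_eq (negbTE (v_no_out y)).
case/andP: r_p => /[dup] r_xd /andP[_ /forallP d_uniq] r_p /(implyP (d_uniq y)) /eqP ->.
by rewrite r_xd; apply/connectP; exists p.
Qed.

Hypothesis reach_v : forall u, connect r u v.

Let reach u := [set y | connect r u y].

(* u is not reachable back from u': the r-chain from u' is forced and ends at
   the terminal vertex v. *)
Lemma card_reach_lt u u' : r u u' -> #|reach u'| < #|reach u|.
Proof.
move=> r_uu'; apply/proper_card/properP; split.
  by apply/subsetP=> y; rewrite !inE; apply: connect_trans (connect1 r_uu').
exists u; rewrite !inE ?connect0 //; apply/negP => u'_u.
have to_u_closed a b : connect r a u -> r a b -> connect r b u.
  move=> /connectP[[|c p] /= r_p u_eq] r_ab.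
    by rewrite -u_eq in r_ab; rewrite (unique_out_fun r_ab r_uu').
  case/andP: r_p => r_ac r_p; rewrite (unique_out_fun r_ab r_ac).
  by apply/connectP; exists p.
have /connectP[[|c p] /= r_p v_eq] := connect_closed_in to_u_closed u'_u (reach_v u').
  by case/andP: r_uu'; rewrite v_eq (negbTE (v_no_out u')).
by case/andP: r_p => /andP[]; rewrite (negbTE (v_no_out c)).
Qed.

(* At a vertex of the cycle with largest reach set both cycle edges point
   outwards, against the unicity of its out-edge. *)
Lemma unique_out_acyclic : is_orientation e o -> ~ has_cycle e.
Proof.
move=> o_or [x [p [szp uniq_c path_p last_p]]].
have cycle_c : cycle e (x :: p) by rewrite /= rcons_path path_p last_p.
have [m m_c m_max] := arg_maxnP (fun y => #|reach y|) (mem_head x p).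
have out_m y : e m y -> y \in x :: p -> o (m, y).
  move=> e_my y_c; rewrite (orientation_flip o_or e_my); apply/negP => o_ym.
  have /andP[r_ym _] := unique_out_step (reach_v y) o_ym.
  by have := m_max y y_c; rewrite /= leqNgt (card_reach_lt r_ym).
have [a [b [a_c b_c a_neq_b e_ma e_mb]]] :=
  cycle_two_neighbours sym_e uniq_c (szp : 2 < (size p).+1) cycle_c m_c.
have /andP[/andP[_ /forallP a_uniq] _] := unique_out_step (reach_v m) (out_m a e_ma a_c).
by rewrite (eqP (implyP (a_uniq b) (out_m b e_mb b_c))) eqxx in a_neq_b.
Qed.

End UniqueOutChains.

Definition decode t v w : {ffun T * T -> bool} :=
  reverse_edges t (fun a _ => connect [rel x y | t (x, y) && (x != w)] v a && (a != w)).

Definition reverse_path s v w b : {ffun T * T -> bool} :=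
  reverse_edges s (fun a c =>
    (a \in [set x | connect (unique_out s) b x && connect (unique_out s) x v])
    || ((a == w) && (c == b))).

Section OneSink.
Hypotheses (conn : connected_graph e) (not_tree : ~ is_tree e).
Variables (s : {ffun T * T -> bool}) (v : T).
Hypotheses (s_or : is_orientation e s) (v_sink : is_sink e s v)
  (v_unique : forall u, is_sink e s u -> u = v).
Local Notation r := (unique_out s).

Let v_no_out y : ~~ s (v, y).
Proof. by apply: contraTN v_sink => s_vy; apply/(not_sinkP _ s_or); exists y. Qed.

Lemma exists_entry_edge :
  exists w b, [/\ ~~ connect r w v, connect r b v & s (w, b)].
Proof.
case: (boolP [exists w, exists b, [&& ~~ connect r w v, connect r b v & s (w, b)]]).
  by case/existsP=> w /existsP[b /and3P[]]; exists w, b.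
move=> /existsPn no_entry; case: not_tree; split=> //.
apply: (unique_out_acyclic v_no_out _ s_or) => u.
apply: (connect_closed_in (S := connect r ^~ v) _ (connect0 r v) (conn v u)).
move=> a c /= a_v e_ac.
case s_ca: (s (c, a)).
  by move: (no_entry c) => /existsPn/(_ a); rewrite a_v s_ca !andbT => /negPn.
have s_ac : s (a, c) by rewrite (orientation_flip s_or e_ac) s_ca.
by case/andP: (unique_out_step v_no_out a_v s_ac).
Qed.

Section ReversePath.
Variables (w b : T).
Hypotheses (w_far : ~~ connect r w v) (b_near : connect r b v) (s_wb : s (w, b)).

Let chain := [set x | connect r b x && connect r x v].
Let P a c := (a \in chain) || ((a == w) && (c == b)).
Let t := reverse_path s v w b.

Let tE a c : t (a, c) = (s (a, c) && ~~ P a c) || (s (c, a) && P c a).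
Proof. exact: reverse_edgesE. Qed.

Let t_reversed a c : s (c, a) -> P c a -> t (a, c).
Proof. by rewrite tE => -> ->; rewrite orbT. Qed.

Let v_in_chain : v \in chain. Proof. by rewrite inE b_near connect0. Qed.
Let b_in_chain : b \in chain. Proof. by rewrite inE connect0 b_near. Qed.
Let w_notin_chain : w \notin chain. Proof. by rewrite inE negb_and w_far orbT. Qed.

Lemma chain_out_closed c x : c \in chain -> s (c, x) -> x \in chain.
Proof.
rewrite !inE => /andP[b_c c_v] s_cx.
have /andP[r_cx ->] := unique_out_step v_no_out c_v s_cx.
by rewrite (connect_trans b_c (connect1 r_cx)).
Qed.

Lemma reverse_path_sink_free u : ~~ is_sink e t u.
Proof.
apply/(not_sinkP _ (reverse_edges_orientation P s_or)).
have [-> | u_neq_w] := eqVneq u w.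
  have [y s_wy y_neq_b] : exists2 y, s (w, y) & y != b.
    apply/exists_inP; apply: contraNT w_far => /exists_inPn no_other_out.
    apply: connect_trans (connect1 _) b_near; apply/andP; split=> //.
    by apply/forallP => y; apply/implyP => s_wy; rewrite -[y == b]negbK no_other_out.
  by exists y; rewrite tE s_wy /P (negbTE w_notin_chain) eqxx (negbTE y_neq_b).
case u_chain: (u \in chain).
  have [<- | b_neq_u] := eqVneq b u.
    by exists w; rewrite t_reversed // /P !eqxx orbT.
  move: u_chain; rewrite inE => /andP[b_u u_v].
  have [a b_a r_au] := connect_last_step b_u b_neq_u.
  have a_chain : a \in chain by rewrite inE b_a (connect_trans (connect1 r_au) u_v).
  by exists a; rewrite t_reversed /P ?a_chain //; case/andP: r_au.
have u_neq_v : u != v by apply: contraFneq u_chain => ->.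
have /(not_sinkP _ s_or)[y s_uy] : ~~ is_sink e s u.
  by apply: contra u_neq_v => /v_unique ->.
by exists y; rewrite tE s_uy /P u_chain (negbTE u_neq_w).
Qed.

Lemma reach_avoiding_entry a :
  connect [rel x y | t (x, y) && (x != w)] v a && (a != w) = (a \in chain).
Proof.
apply/idP/idP => [/andP[v_a a_neq_w] | a_chain].
  have : (a \in chain) || (a == w).
    apply: (connect_closed_in (S := fun x => (x \in chain) || (x == w)) _ _ v_a).
      move=> x y /= /orP[x_chain | /eqP ->]; last by rewrite eqxx andbF.
      rewrite tE /P x_chain andbF /= => /andP[/andP[_ /orP[-> // | /andP[-> _]]] _].
      by rewrite orbT.
    by rewrite v_in_chain.
  by rewrite (negbTE a_neq_w) orbF.
have a_neq_w : a != w by apply: contraNneq w_notin_chain => <-.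
rewrite a_neq_w andbT; have /= <- := connect_rev [rel x y | t (x, y) && (x != w)] a v.
move: (a_chain); rewrite inE => /andP[_ a_v].
apply: (connect_sub_in (S := [in chain]) _ _ a_chain a_v) => x y x_chain /andP[s_xy _].
  exact: chain_out_closed x_chain s_xy.
have y_neq_w : y != w.
  by apply: contraNneq w_notin_chain => <-; apply: chain_out_closed x_chain s_xy.
by rewrite /= y_neq_w andbT t_reversed // /P x_chain.
Qed.

Lemma decode_reverse_path : decode t v w = s.
Proof.
rewrite /decode; apply: (reverse_edgesK s_or) => a c; rewrite reach_avoiding_entry tE.
case a_chain: (a \in chain); first by rewrite /P a_chain andbF /= => /andP[-> ->].
move=> _; apply/esym/negbTE/negP => /andP[s_ca].
rewrite /P => /orP[c_chain | /andP[_ /eqP a_b]].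
  by rewrite (chain_out_closed c_chain s_ca) in a_chain.
by rewrite a_b b_in_chain in a_chain.
Qed.

End ReversePath.

Lemma one_sink_decode : exists t w,
  [/\ is_orientation e t, forall u, ~~ is_sink e t u, v != w & decode t v w = s].
Proof.
have [w [b [w_far b_near s_wb]]] := exists_entry_edge.
exists (reverse_path s v w b), w; split.
- exact: reverse_edges_orientation.
- exact: reverse_path_sink_free.
- by apply: contraNneq w_far => <-; apply: connect0.
- exact: decode_reverse_path.
Qed.

End OneSink.
End Orientations.

Lemma card_offdiag (T : finType) : #|[set q : T * T | q.1 != q.2]| = #|T| * (#|T| - 1).
Proof.
have card_diag : #|[set q : T * T | q.1 == q.2]| = #|T|.
  have diag_inj : injective (fun x : T => (x, x)) by move=> x y [].
  rewrite -(card_imset _ diag_inj); apply: eq_card => -[a b].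
  by rewrite inE; apply/eqP/imsetP => [/= ->|[x _ [-> ->]]]; [exists b|].
have -> : [set q : T * T | q.1 != q.2] = ~: [set q : T * T | q.1 == q.2].
  by apply/setP => q; rewrite !inE.
have := cardsC [set q : T * T | q.1 == q.2].
by rewrite card_prod card_diag mulnBr muln1 => <-; rewrite addKn.
Qed.

Lemma card_one_sink_le (T : finType) (e : rel T) :
  symmetric e -> connected_graph e -> ~ is_tree e ->
  Z_sink e 1 <= Z_sink e 0 * (#|T| * (#|T| - 1)).
Proof.
move=> sym_e conn not_tree; rewrite /Z_sink -card_offdiag -cardsX.
apply: leq_trans (leq_imset_card (fun q => decode q.1 q.2.1 q.2.2) _).
apply/subset_leq_card/subsetP => s; rewrite inE => /andP[s_or /cards1P[v sinks_v]].
have v_sink : is_sink e s v by have := set11 v; rewrite -sinks_v inE.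
have v_unique u : is_sink e s u -> u = v.
  by move=> u_sink; apply/set1P; rewrite -sinks_v inE.
have [t [w [t_or t_sink_free v_neq_w <-]]] :=
  one_sink_decode sym_e conn not_tree s_or v_sink v_unique.
apply/imsetP; exists (t, (v, w)) => //.
rewrite !inE t_or v_neq_w andbT /num_sinks cards_eq0; apply/eqP/setP => u.
by rewrite !inE (negbTE (t_sink_free u)).
Qed.

Theorem theorem17 (T : finType) (e : rel T) :
  simple_graph e -> connected_graph e -> ~ is_tree e ->
  ((Z_sink e 1)%:R / (Z_sink e 0)%:R <= (#|T| * (#|T| - 1))%:R :> rat)%R.
Proof.
move=> [sym_e _] conn not_tree.
have Z1_le := card_one_sink_le sym_e conn not_tree.
have [-> | Z0_pos] := posnP (Z_sink e 0); first by rewrite invr0 mulr0 ler0n.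
by rewrite ler_pdivrMr ?ltr0n // -natrM ler_nat mulnC.
Qed.
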